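(* Assume the rearrangement setting described in the context, with $R$ a poset. Assume moreover that: - $\beta$ is a bijection $X\to Y$ which is a homomorphism from $R|_X$ to $R|_Y$; - for every $x\in X$, $N^{in}_R(x)\setminus M\subseteq N^{in}_R(\beta(x))$ and $N^{out}_R(x)\setminus M\subseteq N^{out}_R(\beta(x))$; - $X$ is convex in $R$; - there is no walk in $R$ from $M$ to $Y$ and no walk in $R$ from $Y$ to $M$. Let $T$ be the transitive hull of $S$. Then $T$ is a poset and $R\sqsubseteq_\Gamma T$ with respect to $\mathfrak{D}$.
   Context: **Digraphs and homomorphisms.** - A digraph $G$ is a pair $(V(G),A(G))$, where $V(G)$ is a finite non-empty set and $A(G)\subseteq V(G)\times V(G)$. Arcs are written $vw$. - A poset is a reflexive, antisymmetric, transitive digraph. - A homomorphism $\xi:G\to H$ is a map $V(G)\to V(H)$ with $\xi(v)\xi(w)\in A(H)$ for all $vw\in A(G)$. $\mathcal{H}(G,H)$ is the set of homomorphisms. - Two vertices $u,w$ are adjacent if $uw\in A(G)$ or $wu\in A(G)$. - $N_G(v)$ is the set of $w\ne v$ adjacent to $v$. $N^{in}_G(v)=\{w\in N_G(v):wv\in A(G)\}$ and $N^{out}_G(v)=\{w\in N_G(v):vw\in A(G)\}$. - $G|_X$ is the induced subdigraph on $X$. - A walk is a sequence $v_0,\dots,v_I$ with $I\ge1$ and $v_{i-1}v_i\in A(G)$. A walk from $A$ to $B$ is one with $v_0\in A$ and $v_I\in B$. - A set $X$ is convex if every walk starting and ending in $X$ has all its vertices in $X$. - The transitive hull of $G$ is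 the digraph on $V(G)$ whose arc set is the smallest transitive relation containing $A(G)$. - $\mathfrak{D}$ is the class of all digraphs. **Rearrangement setting.** - $R=(Z,A(R))$ is a digraph. - $X,M\subseteq Z$ are disjoint. - $Y\subseteq Z$ satisfies $M\cap Y=\emptyset$ and $M\cap N_R(y)=\emptyset$ for all $y\in Y$. - $\beta:X\to Y$ is a map. - $S$ is the digraph with $V(S)=Z$ and $A(S)=A_r\cup A_d\cup A_u$, where: - $A_r=A(R)\setminus((M\times X)\cup(X\times M))$; - $A_d=\{m\beta(x): mx\in A(R)\cap(M\times X)\}$; - $A_u=\{\beta(x)m: xm\in A(R)\cap(X\times M)\}$. **Connectivity and schemes.** - For $X'\subseteq V(G)$ and $v,w\in X'$, the vertices $v$ and $w$ are connected in $X'$ if $v=w$, or if there are $z_0=v,\dots,z_I=w$ in $X'$ with consecutive terms adjacent. - $\gamma_{X'}(v)$ is the set of such $w$. - $\Gamma_\xi(v)=\gamma_{\xi^{-1}(\xi(v))}(v)$. - $\mathfrak{D}_r$ is a fixed system of representatives of $\mathfrak{D}$ up to isomorphism. - $R\sqsubseteq_\Gamma T$ with respect to $\mathfrak{D}$ means there exist injective maps $\rho_G:\mathcal{H}(G,R)\to\mathcal{H}(G,T)$, $G\in\mathfrak{D}_r$, with $\Gamma_{\rho_G(\xi)}(v)=\Gamma_\xi(v)$ for all $G$, $\xi$ and $v$. *)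

From mathcomp Require Import ssreflect ssrfun ssrbool eqtype ssrnat seq path choice fintype finfun finset fingraph.
Set Implicit Arguments. Unset Strict Implicit. Unset Printing Implicit Defensive.

Section Digraphs.
Variable V : finType.
Implicit Types (e : rel V) (A : {set V}) (v w : V).

Definition is_poset e : Prop :=
  [/\ reflexive e, antisymmetric e & transitive e].

Definition Nin e v : {set V} := [set w | (w != v) && e w v].
Definition Nout e v : {set V} := [set w | (w != v) && e v w].
Definition Nbhd e v : {set V} := Nin e v :|: Nout e v.

(* a walk v0, v1, ..., vI (I >= 1) is  v0 :: s  with s non-empty *)
Definition is_walk e v0 (s : seq V) : bool := (s != [::]) && path e v0 s.

Definition walk_from_to e A (B : {set V}) : Prop :=
  exists v0 s, [/\ is_walk e v0 s, v0 \in A & last v0 s \in B].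

Definition convex e A : Prop :=
  forall v0 s, is_walk e v0 s -> v0 \in A -> last v0 s \in A ->
    all (fun u => u \in A) (v0 :: s).

(* transitive hull: smallest transitive relation containing e *)
Definition trans_hull e : rel V :=
  fun a b => [exists z, e a z && connect e z b].

Definition adjacent e v w : bool := e v w || e w v.
Definition gamma e (X' : {set V}) v : {set V} :=
  [set w | connect [rel a b | [&& a \in X', b \in X' & adjacent e a b]] v w].
End Digraphs.

Definition is_hom (V W : finType) (eG : rel V) (eH : rel W) (f : V -> W) : Prop :=
  forall v w, eG v w -> eH (f v) (f w).

Definition Gamma (V W : finType) (eG : rel V) (xi : {ffun V -> W}) (v : V) : {set V} :=
  gamma eG [set u | xi u == xi v] v.

(* R ⊑_Γ T w.r.t. the class of all (finite, non-empty) digraphs *)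
Definition sqsubGamma (Z : finType) (eR eT : rel Z) : Prop :=
  forall (V : finType) (eG : rel V), 0 < #|V| ->
    exists rho : {ffun V -> Z} -> {ffun V -> Z},
      [/\ forall xi : {ffun V -> Z}, is_hom eG eR xi -> is_hom eG eT (rho xi),
          forall xi1 xi2 : {ffun V -> Z}, is_hom eG eR xi1 -> is_hom eG eR xi2 ->
             rho xi1 = rho xi2 -> xi1 = xi2
        & forall (xi : {ffun V -> Z}) v, is_hom eG eR xi -> Gamma eG (rho xi) v = Gamma eG xi v].

Definition rearr (Z : finType) (eR : rel Z) (X M : {set Z}) (beta : Z -> Z) : rel Z :=
  fun a b =>
    [|| eR a b && ~~ (((a \in M) && (b \in X)) || ((a \in X) && (b \in M))),
        (a \in M) && [exists x in X, eR a x && (b == beta x)]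
      | (b \in M) && [exists x in X, eR x b && (a == beta x)]].

From mathcomp Require Import ssreflect ssrfun ssrbool eqtype ssrnat seq path choice fintype finfun finset fingraph.
Set Implicit Arguments. Unset Strict Implicit. Unset Printing Implicit Defensive.

(* S is reflexive, so T is just the reachability relation of S
   and is reflexive and transitive.  For antisymmetry it suffices that every
   arc of S lying on a closed S-walk is an arc of R: then mutually reachable
   vertices are R-comparable both ways, hence equal.  The arcs of S that are
   not arcs of R are "down" arcs m -> beta x (m in M, m <= x) and "up" arcs
   beta x -> m (x <= m); an invariant carried around a putative cycle shows
   that neither kind lies on a cycle, using the convexity of X and the
   absence of walks between M and Y.

   A homomorphism xi : G -> R is recoloured by moving, via
   beta, exactly those vertices v with xi v in X whose Gamma-component is
   adjacent to a vertex mapped into M.  The recoloured map rho xi is a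
   homomorphism into S, it has the same equality pattern as xi on adjacent
   vertices (hence the same Gamma-components), and the moved vertices can be
   read off rho xi, which makes rho injective. *)

Lemma poset_refl (T : finType) (e : rel T) : is_poset e -> reflexive e.
Proof. by case. Qed.

Lemma poset_trans (T : finType) (e : rel T) : is_poset e -> transitive e.
Proof. by case. Qed.

Section ConnectFacts.
Variables (T : finType) (e : rel T).

Lemma connect_cycle_inv (P : T -> Prop) :
  (forall c d, P c -> e c d -> connect e d c -> P d) ->
  forall a b, P a -> connect e a b -> connect e b a -> P b.
Proof.
move=> step a _ Pa /connectP[p pth ->].
elim: p a Pa pth => //= c p IHp a Pa /andP[ac pth] back.
have cb : connect e c (last c p) by apply/connectP; exists p.
exact: IHp (step a c Pa ac (connect_trans cb back)) pth
  (connect_trans back (connect1 ac)).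
Qed.

Lemma sub_trans_hull : subrel e (trans_hull e).
Proof. by move=> a b ab; apply/existsP; exists b; rewrite ab connect0. Qed.

Lemma trans_hull_connect : reflexive e -> trans_hull e =2 connect e.
Proof.
move=> e_refl a b; apply/existsP/idP => [[z /andP[az zb]]|ab].
  exact: connect_trans (connect1 az) zb.
by exists a; rewrite e_refl.
Qed.

Lemma cycle_connect_le (eR : rel T) : reflexive eR -> transitive eR ->
  (forall c d, e c d -> connect e d c -> eR c d) ->
  forall a b, connect e a b -> connect e b a -> eR a b.
Proof.
move=> R_refl R_trans cyc a b.
apply: (@connect_cycle_inv (fun c => eR a c)) (R_refl a).
by move=> c d ac cd dc; apply: R_trans ac (cyc c d cd dc).
Qed.

Lemma trans_hull_poset (eR : rel T) : reflexive e -> is_poset eR ->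
  (forall c d, e c d -> connect e d c -> eR c d) -> is_poset (trans_hull e).
Proof.
move=> e_refl [R_refl R_anti R_trans] cyc.
have le := cycle_connect_le R_refl R_trans cyc.
split=> [a | a b | b a c]; rewrite ?trans_hull_connect //.
- by move=> /andP[ab ba]; apply: R_anti; rewrite !le.
- exact: connect_trans.
Qed.
End ConnectFacts.

Section GammaFacts.
Variables (V W : finType) (e : rel V).

(* Adjacency restricted to pairs on which f takes the same value: the
   Gamma-components of f are the components of this symmetric relation. *)
Definition same_adj (f : V -> W) : rel V :=
  [rel a b | adjacent e a b && (f a == f b)].

Lemma same_adj_connect_sym f : connect_sym (same_adj f).
Proof. by apply: sym_connect_sym => a b; rewrite /same_adj /= /adjacent orbC eq_sym. Qed.

Lemma mem_gamma_fiber (f : V -> W) v w :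
  (w \in gamma e [set u | f u == f v] v) = connect (same_adj f) v w.
Proof.
rewrite inE; apply/idP/idP.
  apply: connect_sub => a b /and3P[]; rewrite !inE => /eqP fa /eqP fb ab.
  by apply: connect1; rewrite /same_adj /= ab fa fb eqxx.
move=> /connectP[p pth ->]; apply/connectP; exists p => //.
have fiber_path c a : f a = c -> path (same_adj f) a p ->
    path [rel x y | [&& x \in [set u | f u == c], y \in [set u | f u == c]
                     & adjacent e x y]] a p.
  elim: p a {pth} => //= b p IHp a fa /andP[/andP[ab /eqP fab] pth].
  by rewrite !inE -fab fa eqxx ab IHp // -fab.
exact: fiber_path.
Qed.

Variable xi : {ffun V -> W}.

Lemma Gamma_const v w : w \in Gamma e xi v -> xi w = xi v.
Proof.
rewrite mem_gamma_fiber => vw; apply/eqP.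
have closed_fiber : closed (same_adj xi) [pred u | xi u == xi v].
  apply: intro_closed; first exact: same_adj_connect_sym.
  by move=> a b; rewrite /same_adj /= !inE => /andP[_ /eqP ->].
by have := closed_connect closed_fiber vw; rewrite !inE eqxx => <-.
Qed.

Lemma Gamma_trans v w : w \in Gamma e xi v -> Gamma e xi w = Gamma e xi v.
Proof.
rewrite mem_gamma_fiber => vw; apply/setP => u; rewrite !mem_gamma_fiber.
by rewrite (same_connect (same_adj_connect_sym xi) vw).
Qed.

Lemma Gamma_adj v w : adjacent e v w -> xi v = xi w -> w \in Gamma e xi v.
Proof. by move=> vw xivw; rewrite mem_gamma_fiber connect1 // /same_adj /= vw xivw eqxx. Qed.

Lemma eq_Gamma (xi' : {ffun V -> W}) v :
  (forall a b, adjacent e a b -> (xi' a == xi' b) = (xi a == xi b)) ->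
  Gamma e xi' v = Gamma e xi v.
Proof.
move=> same; apply/setP => w; rewrite !mem_gamma_fiber; apply: eq_connect => a b.
rewrite /same_adj /=.
by case ab: (adjacent e a b); rewrite //= same.
Qed.
End GammaFacts.

Section Rearrangement.
Variables (Z : finType) (eR : rel Z) (X M Y : {set Z}) (beta : Z -> Z).
Hypothesis R_poset : is_poset eR.
Hypothesis X_M_disj : [disjoint X & M].
Hypothesis M_Y_disj : [disjoint M & Y].
Hypothesis beta_Y : {in X, forall x, beta x \in Y}.
Hypothesis beta_inj : {in X &, injective beta}.
Hypothesis beta_hom : {in X &, forall x x', eR x x' -> eR (beta x) (beta x')}.
Hypothesis beta_Nin : forall x, x \in X -> Nin eR x :\: M \subset Nin eR (beta x).
Hypothesis beta_Nout : forall x, x \in X -> Nout eR x :\: M \subset Nout eR (beta x).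
Hypothesis X_convex : convex eR X.
Hypothesis no_walk_MY : ~ walk_from_to eR M Y.
Hypothesis no_walk_YM : ~ walk_from_to eR Y M.

Local Notation S := (rearr eR X M beta).

Let R_refl : reflexive eR := poset_refl R_poset.
Let R_trans : transitive eR := poset_trans R_poset.

Lemma X_notin_M x : x \in X -> x \notin M.
Proof. by move=> xX; rewrite (disjointFr X_M_disj xX). Qed.

Lemma Y_notin_M y : y \in Y -> y \notin M.
Proof. by move=> yY; rewrite (disjointFl M_Y_disj yY). Qed.

Lemma no_arc_MY m y : m \in M -> y \in Y -> ~~ eR m y.
Proof.
by move=> mM yY; apply/negP => my; apply: no_walk_MY; exists m, [:: y]; rewrite /is_walk /= my.
Qed.

Lemma no_arc_YM m y : m \in M -> y \in Y -> ~~ eR y m.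
Proof.
by move=> mM yY; apply/negP => ym; apply: no_walk_YM; exists y, [:: m]; rewrite /is_walk /= ym.
Qed.

Lemma convex_between x z x' : x \in X -> x' \in X -> eR x z -> eR z x' -> z \in X.
Proof.
move=> xX x'X xz zx'.
have := @X_convex x [:: z; x']; rewrite /is_walk /= xz zx' xX x'X.
by move=> /(_ isT isT isT) /and3P[].
Qed.

Lemma beta_out x z : x \in X -> z \notin M -> z != x -> eR x z ->
  (z != beta x) && eR (beta x) z.
Proof.
move=> xX zM zx xz; have /(subsetP (beta_Nout xX)) : z \in Nout eR x :\: M.
  by rewrite !inE zM zx xz.
by rewrite inE.
Qed.

Lemma beta_in x z : x \in X -> z \notin M -> z != x -> eR z x ->
  (z != beta x) && eR z (beta x).
Proof.
move=> xX zM zx zx'; have /(subsetP (beta_Nin xX)) : z \in Nin eR x :\: M.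
  by rewrite !inE zM zx zx'.
by rewrite inE.
Qed.

Lemma beta_neq_nbr x z : x \in X -> z != x -> eR x z || eR z x -> z != beta x.
Proof.
move=> xX zx xz; case zM: (z \in M).
  by apply: contraTneq zM => ->; rewrite Y_notin_M ?beta_Y.
by case/orP: xz => [/(beta_out xX) | /(beta_in xX)] => /(_ (negbT zM) zx) /andP[].
Qed.

Variant rearr_arc_spec a b : Prop :=
  | ArcKept of eR a b
  | ArcDown x of a \in M & x \in X & eR a x & b = beta x
  | ArcUp x of b \in M & x \in X & eR x b & a = beta x.

Lemma rearrP a b : S a b -> rearr_arc_spec a b.
Proof.
case/or3P=> [/andP[ab _] | /andP[aM /existsP[x /and3P[xX ax /eqP ->]]]
            | /andP[bM /existsP[x /and3P[xX xb /eqP ->]]]].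
- exact: ArcKept.
- exact: ArcDown aM xX ax _.
- exact: ArcUp bM xX xb _.
Qed.

Lemma rearr_keep a b : eR a b -> ~~ ((a \in M) && (b \in X)) ->
  ~~ ((a \in X) && (b \in M)) -> S a b.
Proof. by move=> ab aMbX aXbM; apply/or3P/Or31; rewrite ab negb_or aMbX aXbM. Qed.

Lemma rearr_down m x : m \in M -> x \in X -> eR m x -> S m (beta x).
Proof.
by move=> mM xX mx; apply/or3P/Or32; rewrite mM; apply/existsP; exists x; rewrite xX mx /=.
Qed.

Lemma rearr_up x m : x \in X -> m \in M -> eR x m -> S (beta x) m.
Proof.
by move=> xX mM xm; apply/or3P/Or33; rewrite mM; apply/existsP; exists x; rewrite xX xm /=.
Qed.

Lemma rearr_refl : reflexive S.
Proof.
move=> a; apply: rearr_keep; first exact: R_refl.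
  by apply/andP => -[aM /X_notin_M]; rewrite aM.
by apply/andP => -[/X_notin_M aM]; rewrite (negbTE aM).
Qed.

Lemma rearr_shift_both x x' : x \in X -> x' \in X -> eR x x' -> S (beta x) (beta x').
Proof.
move=> xX x'X xx'; apply: rearr_keep; first exact: beta_hom.
  by rewrite (negbTE (Y_notin_M (beta_Y xX))).
by rewrite (negbTE (Y_notin_M (beta_Y x'X))) andbF.
Qed.

Lemma rearr_shift_out x z : x \in X -> z != x -> eR x z -> S (beta x) z.
Proof.
move=> xX zx xz; case zM: (z \in M); first exact: rearr_up.
have /andP[_ bz] := beta_out xX (negbT zM) zx xz.
by apply: rearr_keep => //; rewrite ?zM ?andbF // (negbTE (Y_notin_M (beta_Y xX))).
Qed.

Lemma rearr_shift_in x z : x \in X -> z != x -> eR z x -> S z (beta x).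
Proof.
move=> xX zx zx'; case zM: (z \in M); first exact: rearr_down.
have /andP[_ zb] := beta_in xX (negbT zM) zx zx'.
by apply: rearr_keep => //; rewrite ?zM // (negbTE (Y_notin_M (beta_Y xX))) andbF.
Qed.

(* An up arc beta x -> m lies on no cycle of S: along such a cycle every
   vertex would stay above some point of M lying above x, and beta x in Y
   cannot be above a point of M. *)
Lemma up_arc_acyclic x m : x \in X -> m \in M -> eR x m -> ~~ connect S m (beta x).
Proof.
move=> xX mM xm; apply/negP => back.
pose above_M c := exists2 m', m' \in M & eR x m' && eR m' c.
have step c d : above_M c -> S c d -> connect S d c -> above_M d.
  case=> m' m'M /andP[xm' m'c] /rearrP[cd | x' cM x'X cx' _ | x' _ x'X _ cE] _.
  - by exists m' => //; rewrite xm' (R_trans m'c cd).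
  - by have := convex_between xX x'X (R_trans xm' m'c) cx'; move/X_notin_M; rewrite cM.
  - by have := no_arc_MY m'M (beta_Y x'X); rewrite -cE m'c.
have [m' m'M /andP[_ m'b]] : above_M (beta x).
  apply: (connect_cycle_inv step _ back (connect1 (rearr_up xX mM xm))).
  by exists m; rewrite ?xm ?R_refl.
by have := no_arc_MY m'M (beta_Y xX); rewrite m'b.
Qed.

(* A down arc m -> beta x lies on no cycle of S: along such a cycle every
   vertex would stay above some point of Y, and m in M cannot be. *)
Lemma down_arc_acyclic m x : m \in M -> x \in X -> eR m x -> ~~ connect S (beta x) m.
Proof.
move=> mM xX mx; apply/negP => back.
pose below_Y c := exists2 y, y \in Y & eR y c.
have step c d : below_Y c -> S c d -> connect S d c -> below_Y d.
  case=> y yY yc /rearrP[cd | x' cM _ _ _ | x' dM x'X x'd cE] dc.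
  - by exists y => //; apply: R_trans cd.
  - by have := no_arc_YM cM yY; rewrite yc.
  - by have := up_arc_acyclic x'X dM x'd; rewrite -cE dc.
have [y yY ym] : below_Y m.
  apply: (connect_cycle_inv step _ back (connect1 (rearr_down mM xX mx))).
  by exists (beta x); rewrite ?beta_Y ?R_refl.
by have := no_arc_YM mM yY; rewrite ym.
Qed.

Lemma rearr_cycle_arc c d : S c d -> connect S d c -> eR c d.
Proof.
case/rearrP=> [// | x cM xX cx -> | x dM xX xd ->] back.
- by have := down_arc_acyclic cM xX cx; rewrite back.
- by have := up_arc_acyclic xX dM xd; rewrite back.
Qed.

Lemma rearr_hull_poset : is_poset (trans_hull S).
Proof. exact: trans_hull_poset rearr_refl R_poset rearr_cycle_arc. Qed.

Section Recolouring.
Variables (V : finType) (eG : rel V).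
Implicit Type xi : {ffun V -> Z}.

Definition touches_M xi v : bool :=
  [exists u in Gamma eG xi v, exists w, adjacent eG u w && (xi w \in M)].

Definition moved xi v : bool := (xi v \in X) && touches_M xi v.

Definition rho xi : {ffun V -> Z} :=
  [ffun v => if moved xi v then beta (xi v) else xi v].

Lemma rhoE xi v : rho xi v = if moved xi v then beta (xi v) else xi v.
Proof. exact: ffunE. Qed.

Lemma moved_Gamma xi v w : w \in Gamma eG xi v -> moved xi w = moved xi v.
Proof.
by move=> vw; rewrite /moved /touches_M (Gamma_const vw) (Gamma_trans vw).
Qed.

Lemma moved_adj xi v w : xi v \in X -> adjacent eG v w -> xi w \in M -> moved xi v.
Proof.
move=> vX vw wM; rewrite /moved vX; apply/existsP; exists v.
by rewrite mem_gamma_fiber connect0; apply/existsP; exists w; rewrite vw.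
Qed.

Lemma adjacent_hom xi a b : is_hom eG eR xi -> adjacent eG a b ->
  eR (xi a) (xi b) || eR (xi b) (xi a).
Proof. by move=> hom /orP[/hom -> | /hom ->]; rewrite ?orbT. Qed.

Lemma rho_eq_adj xi a b : is_hom eG eR xi -> adjacent eG a b ->
  (rho xi a == rho xi b) = (xi a == xi b).
Proof.
move=> hom ab; rewrite !rhoE.
have [ab_eq | ab_neq] := eqVneq (xi a) (xi b).
  by rewrite (moved_Gamma (Gamma_adj ab ab_eq)) ab_eq !eqxx.
have R_ab := adjacent_hom hom ab.
case aM: (moved xi a); case bM: (moved xi b) => //.
- by move: aM bM => /andP[aX _] /andP[bX _]; apply: contra_neqF ab_neq => /eqP /beta_inj ->.
- move: aM => /andP[aX _]; apply/negbTE; rewrite eq_sym.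
  by apply: beta_neq_nbr; rewrite // eq_sym.
- move: bM => /andP[bX _]; apply/negbTE.
  by apply: beta_neq_nbr; rewrite // orbC.
- exact/negbTE.
Qed.

Lemma Gamma_rho xi v : is_hom eG eR xi -> Gamma eG (rho xi) v = Gamma eG xi v.
Proof. by move=> hom; apply: eq_Gamma => a b; apply: rho_eq_adj. Qed.

Lemma rho_hom xi : is_hom eG eR xi -> is_hom eG S (rho xi).
Proof.
move=> hom v w vw; rewrite !rhoE; have R_vw := hom v w vw.
have vw_adj : adjacent eG v w by rewrite /adjacent vw.
have wv_adj : adjacent eG w v by rewrite /adjacent vw orbT.
have moved_eq : xi v = xi w -> moved xi w = moved xi v.
  by move=> eq_vw; apply: moved_Gamma; apply: Gamma_adj.
case vM: (moved xi v); case wM: (moved xi w).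
- by move: vM wM => /andP[vX _] /andP[wX _]; apply: rearr_shift_both.
- move: (vM) => /andP[vX _]; apply: rearr_shift_out => //.
  by apply: contraFneq wM => /esym /moved_eq ->.
- move: (wM) => /andP[wX _]; apply: rearr_shift_in => //.
  by apply: contraFneq vM => /moved_eq <-.
- apply: rearr_keep => //; apply/andP => -[vX wX].
    by move: wM; rewrite (moved_adj wX wv_adj vX).
  by move: vM; rewrite (moved_adj vX vw_adj wX).
Qed.

Lemma rho_in_M xi w : (rho xi w \in M) = (xi w \in M).
Proof.
rewrite rhoE; case: ifP => // /andP[wX _].
by rewrite (negbTE (Y_notin_M (beta_Y wX))) (negbTE (X_notin_M wX)).
Qed.

Lemma touches_M_rho xi v : is_hom eG eR xi -> touches_M (rho xi) v = touches_M xi v.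
Proof.
move=> hom; rewrite /touches_M Gamma_rho //.
by apply: eq_existsb => u; congr (_ && _); apply: eq_existsb => w; rewrite rho_in_M.
Qed.

(* A touching component is not mapped into Y, since no arc joins Y and M. *)
Lemma touches_M_notin_Y xi v : is_hom eG eR xi -> touches_M xi v -> xi v \notin Y.
Proof.
move=> hom /existsP[u /andP[uv /existsP[w /andP[uw wM]]]]; apply/negP => vY.
rewrite -(Gamma_const uv) in vY.
by case/orP: (adjacent_hom hom uw); apply/negP; [apply: no_arc_YM | apply: no_arc_MY].
Qed.

Lemma moved_rho xi v : is_hom eG eR xi ->
  moved xi v = (rho xi v \in Y) && touches_M (rho xi) v.
Proof.
move=> hom; rewrite touches_M_rho // rhoE.
case vM: (moved xi v); first by move: vM => /andP[vX ->]; rewrite beta_Y.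
by case tM: (touches_M xi v); rewrite ?andbF // (negbTE (touches_M_notin_Y hom tM)).
Qed.

Lemma rho_inj xi1 xi2 : is_hom eG eR xi1 -> is_hom eG eR xi2 ->
  rho xi1 = rho xi2 -> xi1 = xi2.
Proof.
move=> hom1 hom2 eq_rho; apply/ffunP => v.
have moved_eq : moved xi1 v = moved xi2 v by rewrite !moved_rho // eq_rho.
have := congr1 (fun f : {ffun V -> Z} => f v) eq_rho; rewrite /= !rhoE moved_eq.
case v2: (moved xi2 v) => //.
have /andP[v1X _] : moved xi1 v by rewrite moved_eq.
by move: v2 => /andP[v2X _]; apply: beta_inj.
Qed.
End Recolouring.

Lemma rearr_hull_sqsubGamma : sqsubGamma eR (trans_hull S).
Proof.
move=> V eG _; exists (@rho V eG); split.
- by move=> xi hom v w /(rho_hom hom); apply: sub_trans_hull.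
- exact: rho_inj.
- by move=> xi v hom; apply: Gamma_rho.
Qed.
End Rearrangement.

Theorem corollary7 (Z : finType) (eR : rel Z) (X M Y : {set Z}) (beta : Z -> Z) :
  0 < #|Z| ->
  is_poset eR ->
  [disjoint X & M] ->
  [disjoint M & Y] ->
  (forall y, y \in Y -> [disjoint M & Nbhd eR y]) ->
  (* beta : X -> Y is a bijection *)
  {in X, forall x, beta x \in Y} ->
  {in X &, injective beta} ->
  (forall y, y \in Y -> exists2 x, x \in X & beta x = y) ->
  (* beta is a homomorphism R|_X -> R|_Y *)
  {in X &, forall x x', eR x x' -> eR (beta x) (beta x')} ->
  (forall x, x \in X -> Nin eR x :\: M \subset Nin eR (beta x)) ->
  (forall x, x \in X -> Nout eR x :\: M \subset Nout eR (beta x)) ->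
  convex eR X ->
  ~ walk_from_to eR M Y ->
  ~ walk_from_to eR Y M ->
  is_poset (trans_hull (rearr eR X M beta)) /\
  sqsubGamma eR (trans_hull (rearr eR X M beta)).
Proof.
move=> _ R_poset X_M_disj M_Y_disj _ beta_Y beta_inj _ beta_hom beta_Nin beta_Nout
  X_convex no_walk_MY no_walk_YM.
split.
- exact: rearr_hull_poset R_poset X_M_disj beta_Y X_convex no_walk_MY no_walk_YM.
- exact: rearr_hull_sqsubGamma X_M_disj M_Y_disj beta_Y beta_inj beta_hom
    beta_Nin beta_Nout no_walk_MY no_walk_YM.
Qed.
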